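(* For all positive integers $m,n$, \[ \overline{ {m+n \brack n }}_{q,t} = { m+n \brack n }_{q}\; {}_{2}\phi_{1} ( q^{-n}, q^{-m} ; q^{-n-m} ; q, -tq). \]
   Context: An overpartition is a partition in which the last occurrence of each distinct part size may be overlined; its weight $|\lambda|$ is the sum of its parts. $\overline{{m+n \brack n}}_{q,t}=\sum_{\lambda} t^{\#_o(\lambda)} q^{|\lambda|}$, the sum over all overpartitions $\lambda$ with largest part at most $m$ and at most $n$ parts, $\#_o(\lambda)$ being the number of overlined parts. ${m+n \brack n}_q=\frac{(q;q)_{m+n}}{(q;q)_m(q;q)_n}$ is the Gaussian polynomial, with $(a;q)_k=\prod_{j=1}^k(1-aq^{j-1})$. The basic hypergeometric series is ${}_{2}\phi_{1}(a_1,a_2;b_1;q,z)=\sum_{k\ge0}\frac{(a_1;q)_k(a_2;q)_k}{(q;q)_k(b_1;q)_k}z^k$ (here terminating, since $(q^{-n};q)_k=0$ for $k>n$). *)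

From HB Require Import structures.
From mathcomp Require Import all_boot all_order all_algebra.
Set Implicit Arguments. Unset Strict Implicit. Unset Printing Implicit Defensive.
Import Order.TTheory GRing.Theory Num.Theory.
Local Open Scope ring_scope.

Section Defs.
Variable F : fieldType.

Definition qpoch (a q : F) (k : nat) : F := \prod_(j < k) (1 - a * q ^+ j).

Definition gauss_binom (q : F) (m n : nat) : F :=
  qpoch q q (m + n) / (qpoch q q m * qpoch q q n).

Definition phi21 (N : nat) (a1 a2 b1 q z : F) : F :=
  \sum_(k < N.+1) (qpoch a1 q k * qpoch a2 q k) / (qpoch q q k * qpoch b1 q k) * z ^+ k.

(* Overpartitions with largest part <= m and at most n parts: an underlying
   partition is a nonincreasing n-tuple of parts in {0..m} (zeros = padding);
   the overlining is a set S of distinct (positive) part sizes occurring in it. *)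
Definition overpart_gf (m n : nat) (q t : F) : F :=
  \sum_(l : n.-tuple 'I_m.+1 | sorted geq (map val l))
    \sum_(S : {set 'I_m.+1} | [forall s in S, (0 < val s)%N && (s \in l)])
      t ^+ #|S| * q ^+ (\sum_(i <- l) val i)%N.
End Defs.

From HB Require Import structures.
From mathcomp Require Import all_boot all_order all_algebra.
From mathcomp Require Import ring zify.
Set Implicit Arguments. Unset Strict Implicit. Unset Printing Implicit Defensive.
Import GRing.Theory.
Local Open Scope ring_scope.

(* Let A(m, n) be the generating function of overpartitions with parts at most m and at most
   n parts.  Splitting off a largest part equal to m + 1, which is a new overlinable part size
   exactly when it does not occur again, gives
     A(m+1, n+1) = A(m, n+1) + q^(m+1) (A(m+1, n) + t A(m, n)),
   with A = 1 when m = 0 or n = 0.  By the q-Pascal rule for q-trinomial coefficients, the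
   polynomial in t whose k-th coefficient is q^(k(k+1)/2) [m+n-k; m-k, n-k, k]_q satisfies the
   same recursion.  Finally, (q^-N; q)_k = (-q^-N)^k q^(k(k-1)/2) (q;q)_N / (q;q)_(N-k) shows that
   the k-th term of the Gaussian polynomial times the 2phi1 is that coefficient times t^k. *)

Fixpoint nonincr_seqs (n b : nat) : seq (seq nat) :=
  if n is n'.+1 then [seq h :: s | h <- iota 0 b.+1, s <- nonincr_seqs n' h]
  else [:: [::]].

Lemma nonincr_seqsS n b :
  nonincr_seqs n.+1 b = [seq h :: s | h <- iota 0 b.+1, s <- nonincr_seqs n h].
Proof. by []. Qed.

Lemma geq_trans : transitive geq.
Proof. by move=> y x z /[swap]; apply: leq_trans. Qed.

Lemma mem_nonincr_seqs n b s :
  (s \in nonincr_seqs n b) = [&& size s == n, all (leq^~ b) s & sorted geq s].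
Proof.
elim: n b s => [|n IHn] b [|h s] //; rewrite nonincr_seqsS.
  by apply/negbTE/allpairsPdep => -[? [? []]].
rewrite [in RHS]/= (path_sortedE geq_trans) eqSS.
apply/allpairsPdep/idP => [[x [y [+ + [-> ->]]]] | /and3P[sz /andP[hb sb] /andP[sh ss]]].
  rewrite IHn mem_iota => /andP[_ ltxb] /and3P[-> ys ->] /=.
  by rewrite -ltnS ltxb ys (sub_all _ ys) // => z /leq_trans; apply.
by exists h, s; rewrite mem_iota IHn sz ss sh ltnS hb.
Qed.

Lemma nonincr_seqs_uniq n b : uniq (nonincr_seqs n b).
Proof.
elim: n b => [|n IHn] b //; rewrite nonincr_seqsS.
apply: allpairs_uniq_dep => //; first exact: iota_uniq.
by move=> [x y] [x' y'] _ _ /= [-> ->].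
Qed.

Lemma nonincr_seqs0 n : nonincr_seqs n 0 = [:: nseq n 0%N].
Proof. by elim: n => //= n ->. Qed.

Lemma nonincr_seqsSS n b :
  nonincr_seqs n.+1 b.+1 = nonincr_seqs n.+1 b ++ [seq b.+1 :: s | s <- nonincr_seqs n b.+1].
Proof. by rewrite !nonincr_seqsS -addn1 iotaD map_cat flatten_cat /= cats0. Qed.

Lemma filter_nonincr_seqs n b :
  [seq s <- nonincr_seqs n b.+1 | b.+1 \notin s] = nonincr_seqs n b.
Proof.
case: n => [|n] //; rewrite nonincr_seqsSS filter_cat -[RHS]cats0; congr (_ ++ _).
  apply/all_filterP/allP => s; rewrite mem_nonincr_seqs => /and3P[_ /allP bounded _].
  by apply/negP => /bounded; rewrite ltnn.
apply/eqP; rewrite -[_ == _]negbK -has_filter.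
by apply/hasPn => _ /mapP[s _ ->]; rewrite negbK mem_head.
Qed.

Lemma big_nonincr_tuples (R : Type) (idx : R) (op : Monoid.com_law idx) (m n : nat)
    (f : seq nat -> R) :
  \big[op/idx]_(l : n.-tuple 'I_m.+1 | sorted geq (map val l)) f (map val l) =
  \big[op/idx]_(s <- nonincr_seqs n m) f s.
Proof.
rewrite -(big_map (fun l : n.-tuple 'I_m.+1 => map val l) (sorted geq)) -big_filter.
apply: perm_big; apply: uniq_perm; last 1 first.
- move=> s; rewrite mem_filter mem_nonincr_seqs andbA [RHS]andbC; congr (_ && _).
  apply/mapP/andP => [[l _ ->] | [/eqP sz /allP bounded]].
    rewrite size_map size_tuple; split => //.
    by apply/allP => _ /mapP[i _ ->]; rewrite -ltnS ltn_ord.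
  have sz_inord : size (map (@inord m) s) == n by rewrite size_map sz.
  exists (Tuple sz_inord); first by rewrite mem_index_enum.
  by rewrite /= -map_comp map_id_in // => x /bounded /= le_xm; rewrite inordK.
- rewrite filter_uniq // map_inj_uniq ?index_enum_uniq //.
  by move=> l1 l2 /(inj_map val_inj) /val_inj.
- exact: nonincr_seqs_uniq.
Qed.

Lemma sum_subset_expr (R : comNzRingType) (I : finType) (B : {set I}) (t : R) :
  \sum_(S : {set I} | S \subset B) t ^+ #|S| = (1 + t) ^+ #|B|.
Proof.
rewrite -prodr_const big_mkcond /=.
transitivity (\prod_(i : I) ((if i \in B then t else 0) + 1)).
  rewrite bigA_distr; apply: eq_bigr => S _.
  case: ifP => [sub_SB | /negbT/subsetPn[i iS iB]].
    rewrite -prodr_const big_mkcond /=; apply: eq_bigr => i _.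
    by case: ifP => // /(subsetP sub_SB) ->.
  by rewrite (bigD1 i) //= iS (negbTE iB) mul0r.
by rewrite [RHS]big_mkcond; apply: eq_bigr => i _; case: ifP => _; rewrite ?add0r // addrC.
Qed.

Section Overweight.
Variables (F : comNzRingType) (q t : F).

(* Each distinct positive part size may or may not be overlined. *)
Definition overweight (s : seq nat) : F :=
  q ^+ sumn s * (1 + t) ^+ size (undup [seq x <- s | (0 < x)%N]).

Lemma overweight_cons b s : (0 < b)%N ->
  overweight (b :: s) = q ^+ b * overweight s * (if b \in s then 1 else 1 + t).
Proof.
move=> b_gt0; rewrite /overweight /= b_gt0 /= mem_filter b_gt0 /= exprD.
by case: (b \in s); rewrite /= ?exprS; ring.
Qed.

Lemma sum_overlinings m (l : seq 'I_m.+1) :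
  \sum_(S : {set 'I_m.+1} | [forall s in S, (0 < val s)%N && (s \in l)])
     t ^+ #|S| * q ^+ (\sum_(i <- l) val i)%N = overweight (map val l).
Proof.
set l' := [seq i <- l | (0 < val i)%N].
rewrite -mulr_suml mulrC /overweight sumnE big_map; congr (_ * _).
transitivity (\sum_(S : {set 'I_m.+1} | S \subset [set i in l']) t ^+ #|S|).
  by apply: eq_bigl => S; apply/forall_inP/subsetP => sub_l x /sub_l; rewrite inE mem_filter.
rewrite sum_subset_expr cardsE filter_map undup_map_inj ?size_map; last exact: val_inj.
by rewrite -(card_uniqP (undup_uniq l')) (eq_card (mem_undup l')).
Qed.

Definition overpart_sum (m n : nat) : F := \sum_(s <- nonincr_seqs n m) overweight s.

Lemma overpart_summ0 m : overpart_sum m 0 = 1.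
Proof. by rewrite /overpart_sum big_seq1 /overweight /= mul1r. Qed.

Lemma overpart_sum0n n : overpart_sum 0 n = 1.
Proof.
rewrite /overpart_sum nonincr_seqs0 big_seq1 /overweight sumn_nseq mul0n mul1r.
by rewrite (@eq_in_filter _ _ pred0) ?filter_pred0 // => x /nseqP[->].
Qed.

Lemma overpart_sumSS m n :
  overpart_sum m.+1 n.+1 =
  overpart_sum m n.+1 + q ^+ m.+1 * (overpart_sum m.+1 n + t * overpart_sum m n).
Proof.
rewrite /overpart_sum nonincr_seqsSS big_cat big_map; congr (_ + _).
rewrite -(filter_nonincr_seqs n m) big_filter [X in t * X]big_mkcond mulr_sumr -big_split.
rewrite mulr_sumr /=.
by apply: eq_bigr => s _; rewrite overweight_cons //; case: (_ \in s) => /=; ring.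
Qed.

End Overweight.

Lemma overpart_gfE (F : fieldType) (q t : F) m n :
  overpart_gf m n q t = overpart_sum q t m n.
Proof.
rewrite /overpart_gf /overpart_sum -big_nonincr_tuples; apply: eq_bigr => l _.
exact: sum_overlinings.
Qed.

Lemma qpochS (F : fieldType) (a q : F) k : qpoch a q k.+1 = qpoch a q k * (1 - a * q ^+ k).
Proof. by rewrite /qpoch big_ord_recr. Qed.

Lemma qpoch0 (F : fieldType) (a q : F) : qpoch a q 0 = 1.
Proof. by rewrite /qpoch big_ord0. Qed.

Lemma qpoch_qinv_eq0 (F : fieldType) (q : F) N k :
  q != 0 -> (N < k)%N -> qpoch (q ^- N) q k = 0.
Proof.
move=> q_neq0 lt_Nk; apply/eqP/prodf_eq0; exists (Ordinal lt_Nk) => //=.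
by rewrite mulVf ?subrr // expf_neq0.
Qed.

Section QIdentities.
Variables (F : fieldType) (q t : F) (M : nat).
Hypothesis q_neq0 : q != 0.
Hypothesis q_not_root1 : forall j : nat, (0 < j <= M)%N -> q ^+ j != 1.

Local Notation qfac := (qpoch q q).

Lemma qfacS k : qfac k.+1 = qfac k * (1 - q ^+ k.+1).
Proof. by rewrite qpochS -exprS. Qed.

Lemma qfac_factor_neq0 j : (0 < j <= M)%N -> 1 - q ^+ j != 0.
Proof. by move=> j_range; rewrite subr_eq0 eq_sym q_not_root1. Qed.

Lemma qfac_neq0 k : (k <= M)%N -> qfac k != 0.
Proof.
move=> le_kM; apply/prodf_neq0 => j _.
by rewrite -exprS qfac_factor_neq0 //; have := ltn_ord j; lia.
Qed.

Lemma qpoch_qinv N k : (k <= N <= M)%N ->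
  qpoch (q ^- N) q k = (- q ^- N) ^+ k * q ^+ 'C(k, 2) * qfac N / qfac (N - k).
Proof.
elim: k => [|k IHk] /andP[le_kN le_NM].
  by rewrite qpoch0 subn0 !expr0 !mul1r divff // qfac_neq0.
rewrite qpochS IHk; last by lia.
have [d eN] : exists d, N = (k.+1 + d)%N by exists (N - k.+1)%N; lia.
subst N.
rewrite addKn addSnnS addKn qfacS binS bin1 !exprD !exprS.
by field; rewrite -exprS qfac_factor_neq0 ?qfac_neq0 ?expf_neq0 ?q_neq0 //; lia.
Qed.

Definition qtrinom (a b c : nat) : F := qfac (a + b + c) / (qfac a * qfac b * qfac c).

Lemma qtrinomS a b c : (a + b + c < M)%N ->
  qtrinom a b c.+1 =
  (if a is a'.+1 then qtrinom a' b c.+1 else 0)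
  + q ^+ (a + c).+1 * (if b is b'.+1 then qtrinom a b' c.+1 else 0)
  + q ^+ a * qtrinom a b c.
Proof.
move=> lt_M; case: a lt_M => [|a] lt_M; case: b lt_M => [|b] lt_M;
  rewrite /qtrinom ?addn0 ?add0n ?qpoch0 ?addSn ?addnS !qfacS ?exprS ?exprD;
  by field; rewrite -?exprS ?qfac_factor_neq0 ?qfac_neq0 ?expf_neq0 ?q_neq0 //; lia.
Qed.

Definition overpart_coef (m n k : nat) : F :=
  if ((k <= m) && (k <= n))%N then q ^+ 'C(k.+1, 2) * qtrinom (m - k) (n - k) k else 0.

Lemma overpart_coefE a b k : overpart_coef (k + a) (k + b) k = q ^+ 'C(k.+1, 2) * qtrinom a b k.
Proof. by rewrite /overpart_coef !leq_addr /= !addKn. Qed.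

Lemma overpart_coef_eq0 m n k : ((m < k) || (n < k))%N -> overpart_coef m n k = 0.
Proof. by rewrite /overpart_coef; case: ifP => //; lia. Qed.

Lemma overpart_coefS a b k :
  overpart_coef (k + a) (k + b) k.+1 =
  if a is a'.+1 then if b is b'.+1 then q ^+ 'C(k.+2, 2) * qtrinom a' b' k.+1 else 0 else 0.
Proof.
case: a b => [|a] [|b]; rewrite [RHS]/=; try by rewrite overpart_coef_eq0 //; lia.
by rewrite -!addSnnS overpart_coefE.
Qed.

Lemma overpart_coefSS0 m n : (m + n.+1 < M)%N ->
  overpart_coef m.+1 n.+1 0 = overpart_coef m n.+1 0 + q ^+ m.+1 * overpart_coef m.+1 n 0.
Proof.
move=> lt_M; rewrite !(overpart_coefE _ _ 0) /qtrinom !addn0 !addSn !addnS !qfacS !exprS exprD.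
by field; rewrite -?exprS ?qfac_factor_neq0 ?qfac_neq0 ?expf_neq0 ?q_neq0 //; lia.
Qed.

Lemma overpart_coefSSS m n k : (m + n.+1 < M)%N ->
  overpart_coef m.+1 n.+1 k.+1 =
  overpart_coef m n.+1 k.+1 + q ^+ m.+1 * (overpart_coef m.+1 n k.+1 + overpart_coef m n k).
Proof.
move=> lt_M; have [/andP[le_km le_kn] | out] := boolP ((k <= m) && (k <= n))%N; last first.
  by rewrite !overpart_coef_eq0 ?add0r ?addr0 ?mulr0 //; lia.
have [a def_m] : exists a, m = (k + a)%N by exists (m - k)%N; lia.
have [b def_n] : exists b, n = (k + b)%N by exists (n - k)%N; lia.
subst m n; rewrite -!addnS !overpart_coefS overpart_coefE qtrinomS; last by lia.
(* 'C(k.+1, 2) is generalized so that exprD cannot unfold it as a sum by computation. *)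
rewrite (binS k.+1 1) bin1; move: 'C(k.+1, 2) => c; rewrite !exprS !exprD.
by case: a b {le_km le_kn lt_M} => [|a] [|b]; rewrite /= ?exprS; ring.
Qed.

Definition overpart_poly (m n : nat) : {poly F} := \poly_(k < n.+1) overpart_coef m n k.

Lemma coef_overpart_poly m n k : (overpart_poly m n)`_k = overpart_coef m n k.
Proof.
rewrite coef_poly; case: ltnP => // lt_nk.
by rewrite overpart_coef_eq0 // lt_nk orbT.
Qed.

Lemma overpart_poly_eq1 m n : (m + n <= M)%N -> ((m == 0) || (n == 0))%N ->
  overpart_poly m n = 1.
Proof.
move=> le_M mn0; apply/polyP => -[|k]; rewrite coef_overpart_poly coefC /=; last first.
  by rewrite overpart_coef_eq0 //; lia.
rewrite (overpart_coefE _ _ 0) /qtrinom expr0 mul1r qpoch0 mulr1.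
by case/orP: mn0 => /eqP->; rewrite ?addn0 qpoch0 ?mul1r ?mulr1 divff // qfac_neq0 //; lia.
Qed.

Lemma overpart_polySS m n : (m + n.+1 < M)%N ->
  overpart_poly m.+1 n.+1 =
  overpart_poly m n.+1 + q ^+ m.+1 *: (overpart_poly m.+1 n + overpart_poly m n * 'X).
Proof.
move=> lt_M; apply/polyP => -[|k]; rewrite coefD coefZ coefD coefMX !coef_overpart_poly /=.
  by rewrite addr0 overpart_coefSS0.
exact: overpart_coefSSS.
Qed.

Lemma overpart_sum_poly m n : (m + n <= M)%N -> overpart_sum q t m n = (overpart_poly m n).[t].
Proof.
elim: m n => [|m IHm] n le_M; first by rewrite overpart_sum0n overpart_poly_eq1 ?hornerC.
elim: n le_M => [|n IHn] le_M.
  by rewrite overpart_summ0 overpart_poly_eq1 ?hornerC ?orbT //; lia.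
rewrite overpart_sumSS overpart_polySS ?hornerD ?hornerZ ?hornerD ?hornerMX; last by lia.
rewrite IHn ?IHm; try lia.
by rewrite [t * _]mulrC.
Qed.

Lemma overpart_coef_phi21 m n k : (m + n <= M)%N -> (k <= n)%N ->
  gauss_binom q m n *
    (qpoch (q ^- n) q k * qpoch (q ^- m) q k / (qfac k * qpoch (q ^- (n + m)) q k)) *
    (- q) ^+ k
  = overpart_coef m n k.
Proof.
move=> le_M le_kn; have [le_km | lt_mk] := leqP k m; last first.
  by rewrite overpart_coef_eq0 ?lt_mk // (qpoch_qinv_eq0 q_neq0 lt_mk) !(mulr0, mul0r).
rewrite /overpart_coef le_km le_kn /qtrinom !qpoch_qinv; try lia.
have -> : (m - k + (n - k) + k = n + m - k)%N by lia.
rewrite /gauss_binom (addnC m n) (binS k 1) bin1; move: 'C(k, 2) => c.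
rewrite !(exprNn (q ^- _)) (exprNn q) -signr_odd.
rewrite [q ^+ (n + m)]exprD [q ^+ (c + k)]exprD !exprVn exprMn.
by case: (odd k) => /=; field; rewrite ?oppr_eq0 ?oner_eq0 ?expf_neq0 ?qfac_neq0 //; lia.
Qed.

Lemma gauss_phi21E m n : (m + n <= M)%N ->
  gauss_binom q m n * phi21 n (q ^- n) (q ^- m) (q ^- (n + m)) q (- (t * q)) =
  (overpart_poly m n).[t].
Proof.
move=> le_M; rewrite /phi21 horner_poly mulr_sumr; apply: eq_bigr => -[k /= lt_kn] _.
by rewrite -overpart_coef_phi21 // -mulrN exprMn; ring.
Qed.

End QIdentities.

Theorem proposition2p4 (F : fieldType) (m n : nat) (q t : F) :
  (0 < m)%N -> (0 < n)%N -> q != 0 ->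
  (forall j : nat, (0 < j <= m + n)%N -> q ^+ j != 1) ->
  overpart_gf m n q t =
  gauss_binom q m n * phi21 n (q ^- n) (q ^- m) (q ^- (n + m)) q (- (t * q)).
Proof.
move=> _ _ q_neq0 q_not_root1.
rewrite overpart_gfE (overpart_sum_poly t q_neq0 q_not_root1) //.
by rewrite (gauss_phi21E t q_neq0 q_not_root1).
Qed.
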